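(* Let $\kappa\in[0,1)$, let $(Q_n)_{n\ge0}$ be $\kappa$-strict pseudocontractions $\mathcal H\to\mathcal H$ with $\mathrm{Fix}(Q_n)=F$ for all $n$ (a set independent of $n$), and let $\alpha_n\in(\kappa,1)$. Assume that for every subsequence $(\sigma(n))$ there are a further subsequence $(\mu(n))$ and a $\kappa$-strict pseudocontraction $Q:\mathcal H\to\mathcal H$ with $\mathrm{Fix}(Q)=F$ such that $Q_{\mu(n)}\to Q$ uniformly on bounded subsets of $\mathcal H$. Let $T_n x=\frac{x+R_nx}{2}+\frac12\big(\frac{\kappa-\alpha_n}{1-\alpha_n}\big)(x-R_nx)$ with $R_nx=\alpha_nx+(1-\alpha_n)Q_nx$. Then $(T_n)_{n\ge0}$ is coherent: for every bounded sequence $(z_n)_{n\ge0}$ in $\mathcal H$ with $\sum_n\|z_{n+1}-z_n\|^2<\infty$ and $\sum_n\|z_n-T_nz_n\|^2<\infty$, every weak cluster point of $(z_n)$ belongs to $\bigcap_{n\ge0}\mathrm{Fix}(T_n)$ $(=F)$.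
   Context: A map $Q:\mathcal H\to\mathcal H$ is a $\kappa$-strict pseudocontraction ($0\le\kappa<1$) if $\|Qx-Qy\|^2\le\|x-y\|^2+\kappa\|(I-Q)x-(I-Q)y\|^2$ for all $x,y$. $\mathrm{Fix}(T)=\{x:Tx=x\}$. $\mathcal H$ is a real Hilbert space. *)

From Stdlib Require Import Reals Lra.
Open Scope R_scope.

Record RealHilbert := {
  carrier :> Type;
  hzero : carrier;
  hadd : carrier -> carrier -> carrier;
  hopp : carrier -> carrier;
  hscal : R -> carrier -> carrier;
  inner : carrier -> carrier -> R;
  hadd_assoc : forall x y z, hadd x (hadd y z) = hadd (hadd x y) z;
  hadd_comm : forall x y, hadd x y = hadd y x;
  hadd_0 : forall x, hadd x hzero = x;
  hadd_opp : forall x, hadd x (hopp x) = hzero;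
  hscal_1 : forall x, hscal 1 x = x;
  hscal_assoc : forall a b x, hscal a (hscal b x) = hscal (a * b) x;
  hscal_distr_v : forall a x y, hscal a (hadd x y) = hadd (hscal a x) (hscal a y);
  hscal_distr_s : forall a b x, hscal (a + b) x = hadd (hscal a x) (hscal b x);
  inner_sym : forall x y, inner x y = inner y x;
  inner_add_l : forall x y z, inner (hadd x y) z = inner x z + inner y z;
  inner_scal_l : forall a x y, inner (hscal a x) y = a * inner x y;
  inner_pos : forall x, 0 <= inner x x;
  inner_def : forall x, inner x x = 0 -> x = hzero;
  complete : forall u : nat -> carrier,
    (forall eps, eps > 0 -> exists N, forall m n, (m >= N)%nat -> (n >= N)%nat ->
        sqrt (inner (hadd (u m) (hopp (u n))) (hadd (u m) (hopp (u n)))) < eps) ->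
    exists l, forall eps, eps > 0 -> exists N, forall n, (n >= N)%nat ->
        sqrt (inner (hadd (u n) (hopp l)) (hadd (u n) (hopp l))) < eps
}.

Arguments hzero {_}.
Arguments hadd {_} _ _.
Arguments hopp {_} _.
Arguments hscal {_} _ _.
Arguments inner {_} _ _.

Definition hsub {H : RealHilbert} (x y : H) : H := hadd x (hopp y).
Definition hnorm {H : RealHilbert} (x : H) : R := sqrt (inner x x).

Definition strict_pseudo {H : RealHilbert} (kappa : R) (Q : H -> H) : Prop :=
  forall x y : H,
    (hnorm (hsub (Q x) (Q y)))^2 <=
      (hnorm (hsub x y))^2 + kappa * (hnorm (hsub (hsub x (Q x)) (hsub y (Q y))))^2.

Definition Fix {H : RealHilbert} (T : H -> H) (x : H) : Prop := T x = x.

Definition strictly_increasing (s : nat -> nat) : Prop :=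
  forall n, (s n < s (S n))%nat.

(* Q_{s n} -> Q uniformly on bounded subsets (every bounded set lies in a ball) *)
Definition unif_conv_bounded {H : RealHilbert} (Qs : nat -> H -> H) (Q : H -> H) : Prop :=
  forall r eps, eps > 0 -> exists N, forall n, (n >= N)%nat ->
    forall x : H, hnorm x <= r -> hnorm (hsub (Qs n x) (Q x)) < eps.

Definition summable (a : nat -> R) : Prop :=
  exists l, Un_cv (fun N => sum_f_R0 a N) l.

Definition bounded_seq {H : RealHilbert} (z : nat -> H) : Prop :=
  exists M, forall n, hnorm (z n) <= M.

Definition weak_cluster_point {H : RealHilbert} (z : nat -> H) (x : H) : Prop :=
  exists k : nat -> nat, strictly_increasing k /\
    forall y : H, Un_cv (fun j => inner (z (k j)) y) (inner x y).

Definition Rop {H : RealHilbert} (alpha : R) (Q : H -> H) (x : H) : H :=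
  hadd (hscal alpha x) (hscal (1 - alpha) (Q x)).

Definition Top {H : RealHilbert} (kappa alpha : R) (Q : H -> H) (x : H) : H :=
  hadd (hscal (1/2) (hadd x (Rop alpha Q x)))
       (hscal ((1/2) * ((kappa - alpha) / (1 - alpha))) (hsub x (Rop alpha Q x))).

Definition coherent {H : RealHilbert} (T : nat -> H -> H) : Prop :=
  forall z : nat -> H,
    bounded_seq z ->
    summable (fun n => (hnorm (hsub (z (S n)) (z n)))^2) ->
    summable (fun n => (hnorm (hsub (z n) (T n (z n))))^2) ->
    forall x, weak_cluster_point z x -> forall n, Fix (T n) x.

(* Let z be bounded with sum ||z_{n+1}-z_n||^2 < oo and sum ||z_n - T_n z_n||^2 < oo,
   and let x be the weak limit of a subsequence (z_{k j}).  The proof has three steps.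
   1. A direct computation gives ||z - T_n z|| = (1-kappa)/2 * ||z - Q_n z||, so the
      residuals ||z_n - Q_n z_n|| tend to 0.
   2. Along a further subsequence nu, Q_{k (nu j)} -> Q uniformly on bounded sets, where
      Q is a kappa-strict pseudocontraction with Fix Q = F; since (z_n) is bounded,
      w_j := z_{k (nu j)} satisfies ||w_j - Q w_j|| -> 0, and still w_j -> x weakly.
   3. Demiclosedness principle: for a kappa-strict pseudocontraction Q (kappa < 1), a
      bounded sequence w_j -> x weakly with ||w_j - Q w_j|| -> 0 forces Q x = x.
   Hence x is in F = Fix Q_n, and every fixed point of Q_n is a fixed point of T_n. *)

From Stdlib Require Import Reals Lra Lia Psatz.
Open Scope R_scope.

Arguments inner_sym {_} _ _.

Lemma inner_add_r {H : RealHilbert} (x y z : H) :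
  inner x (hadd y z) = inner x y + inner x z.
Proof. rewrite inner_sym, inner_add_l, (inner_sym y), (inner_sym z). reflexivity. Qed.

Lemma inner_scal_r {H : RealHilbert} a (x y : H) : inner x (hscal a y) = a * inner x y.
Proof. rewrite inner_sym, inner_scal_l, (inner_sym y). reflexivity. Qed.

Lemma inner_zero_l {H : RealHilbert} (y : H) : inner hzero y = 0.
Proof.
  assert (h : inner (hadd (@hzero H) hzero) y = inner hzero y) by (rewrite hadd_0; reflexivity).
  rewrite inner_add_l in h. lra.
Qed.

Lemma inner_opp_l {H : RealHilbert} (x y : H) : inner (hopp x) y = - inner x y.
Proof.
  assert (h : inner (hadd x (hopp x)) y = 0) by (rewrite hadd_opp; apply inner_zero_l).
  rewrite inner_add_l in h. lra.
Qed.

Lemma inner_opp_r {H : RealHilbert} (x y : H) : inner x (hopp y) = - inner x y.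
Proof. rewrite inner_sym, inner_opp_l, (inner_sym y). reflexivity. Qed.

Ltac expand_inner := unfold hsub in *;
  repeat first [ rewrite inner_add_l in * | rewrite inner_add_r in *
               | rewrite inner_scal_l in * | rewrite inner_scal_r in *
               | rewrite inner_opp_l in * | rewrite inner_opp_r in * ].

Lemma hnorm_sq {H : RealHilbert} (u : H) : hnorm u ^ 2 = inner u u.
Proof. unfold hnorm. apply pow2_sqrt, inner_pos. Qed.

Lemma eq_of_dist0 {H : RealHilbert} (u v : H) : inner (hsub u v) (hsub u v) = 0 -> u = v.
Proof.
  intro h. apply inner_def in h. unfold hsub in h.
  transitivity (hadd u (hadd (hopp v) v)).
  - rewrite (hadd_comm H (hopp v) v), hadd_opp, hadd_0. reflexivity.
  - rewrite hadd_assoc, h, hadd_comm, hadd_0. reflexivity.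
Qed.

Lemma cauchy_schwarz {H : RealHilbert} (u v : H) : inner u v ^ 2 <= inner u u * inner v v.
Proof.
  destruct (Req_dec (inner v v) 0) as [h0|h0].
  - apply inner_def in h0. subst v. rewrite inner_sym, !inner_zero_l. lra.
  - assert (hv : 0 < inner v v) by (pose proof (inner_pos H v); lra).
    set (t := - inner u v / inner v v).
    pose proof (inner_pos H (hadd u (hscal t v))) as hp.
    expand_inner. rewrite (inner_sym v u) in hp.
    assert (e : inner u u * inner v v - inner u v ^ 2 =
       inner v v * (inner u u + t * inner u v + t * (inner u v + t * inner v v)))
      by (unfold t; field; lra).
    assert (0 <= inner u u * inner v v - inner u v ^ 2) by (rewrite e; nra).
    lra.
Qed.

Lemma sq_dist_triangle {H : RealHilbert} (p q r : H) :
  inner (hsub p r) (hsub p r) <=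
  2 * inner (hsub p q) (hsub p q) + 2 * inner (hsub q r) (hsub q r).
Proof.
  pose proof (inner_pos H (hsub (hsub p q) (hsub q r))) as h. expand_inner.
  rewrite (inner_sym q p), (inner_sym r p), (inner_sym r q) in *. lra.
Qed.

Lemma sq_dist_le {H : RealHilbert} (p r : H) :
  inner (hsub p r) (hsub p r) <= 2 * inner p p + 2 * inner r r.
Proof.
  pose proof (inner_pos H (hadd p r)) as h. expand_inner.
  rewrite (inner_sym r p) in *. lra.
Qed.

Lemma Un_cv_const (c : R) : Un_cv (fun _ => c) c.
Proof. intros eps he. exists 0%nat. intros. unfold R_dist. rewrite Rminus_diag, Rabs_R0. lra. Qed.

Lemma Un_cv_ext (u v : nat -> R) l : (forall n, u n = v n) -> Un_cv u l -> Un_cv v l.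
Proof. intros e h eps he. destruct (h eps he) as [N hN]. exists N. intros n hn. rewrite <- e. auto. Qed.

Lemma Un_cv0_scal (u : nat -> R) K : Un_cv u 0 -> Un_cv (fun n => K * u n) 0.
Proof. intro h. replace 0 with (K * 0) by ring. exact (CV_mult _ _ _ _ (Un_cv_const K) h). Qed.

Lemma Un_cv0_squeeze (u v : nat -> R) :
  (forall n, 0 <= u n <= v n) -> Un_cv v 0 -> Un_cv u 0.
Proof.
  intros hb h eps he. destruct (h eps he) as [N hN]. exists N. intros n hn.
  specialize (hN n hn). specialize (hb n). unfold R_dist in *.
  rewrite Rminus_0_r in *. rewrite Rabs_right in hN by lra. rewrite Rabs_right by lra. lra.
Qed.

Lemma Un_cv0_of_sq (u : nat -> R) : Un_cv (fun n => u n ^ 2) 0 -> Un_cv u 0.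
Proof.
  intros h eps he. destruct (h (eps ^ 2) ltac:(nra)) as [N hN]. exists N. intros n hn.
  specialize (hN n hn). unfold R_dist in *. rewrite Rminus_0_r in *.
  rewrite Rabs_right in hN by nra. rewrite <- pow2_abs in hN.
  pose proof (Rabs_pos (u n)). nra.
Qed.

Lemma Un_cv0_lower_bound (s : nat -> R) c : (forall n, c <= s n) -> Un_cv s 0 -> c <= 0.
Proof.
  intros hb h. destruct (Rle_or_lt c 0) as [l|l]; auto.
  destruct (h c l) as [N hN]. specialize (hN N (le_n _)). specialize (hb N).
  unfold R_dist in hN. rewrite Rminus_0_r in hN. apply Rabs_def2 in hN. lra.
Qed.

Lemma summable_terms_cv0 (a : nat -> R) : summable a -> Un_cv a 0.
Proof.
  intros [l h] eps he. destruct (h (eps / 2) ltac:(lra)) as [N hN]. exists (S N).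
  intros n hn. destruct n as [|m]; [lia|].
  assert (e : a (S m) = sum_f_R0 a (S m) - sum_f_R0 a m) by (simpl; ring).
  pose proof (hN (S m) ltac:(lia)) as h1. pose proof (hN m ltac:(lia)) as h2.
  unfold R_dist in *. rewrite Rminus_0_r, e.
  apply Rabs_def2 in h1. apply Rabs_def2 in h2. apply Rabs_def1; lra.
Qed.

Lemma strictly_increasing_ge (s : nat -> nat) : strictly_increasing s -> forall j, (j <= s j)%nat.
Proof. intros hs j. induction j; [lia|]. specialize (hs j). lia. Qed.

Lemma strictly_increasing_comp (s t : nat -> nat) :
  strictly_increasing s -> strictly_increasing t -> strictly_increasing (fun j => s (t j)).
Proof.
  intros hs ht j. specialize (ht j).
  assert (mono : forall a b, (a < b)%nat -> (s a < s b)%nat).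
  { intros a b hab. induction hab as [|b hab IH]; [apply hs|]. specialize (hs b). lia. }
  apply mono, ht.
Qed.

Lemma Un_cv_subseq (u : nat -> R) l (s : nat -> nat) :
  strictly_increasing s -> Un_cv u l -> Un_cv (fun j => u (s j)) l.
Proof.
  intros hs h eps he. destruct (h eps he) as [N hN]. exists N. intros n hn.
  apply hN. pose proof (strictly_increasing_ge s hs n). lia.
Qed.

Lemma inner_cv0_of_bounded {H : RealHilbert} (a d : nat -> H) K :
  Un_cv (fun j => inner (a j) (a j)) 0 -> (forall j, inner (d j) (d j) <= K) ->
  Un_cv (fun j => inner (a j) (d j)) 0.
Proof.
  intros ha hd. apply Un_cv0_of_sq.
  apply Un_cv0_squeeze with (v := fun j => K * inner (a j) (a j)); [|apply Un_cv0_scal, ha].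
  intro j. split; [apply pow2_ge_0|].
  pose proof (cauchy_schwarz (a j) (d j)). pose proof (hd j). pose proof (inner_pos H (a j)).
  nra.
Qed.

Lemma Top_residual {H : RealHilbert} kappa alpha (Q : H -> H) z : alpha < 1 ->
  hnorm (hsub z (Top kappa alpha Q z)) ^ 2 =
  ((1 - kappa) / 2) ^ 2 * inner (hsub z (Q z)) (hsub z (Q z)).
Proof.
  intro ha. rewrite hnorm_sq. unfold Top, Rop. expand_inner.
  rewrite (inner_sym (Q z) z). field. lra.
Qed.

Lemma Top_fix {H : RealHilbert} kappa alpha (Q : H -> H) x :
  alpha < 1 -> Fix Q x -> Fix (Top kappa alpha Q) x.
Proof.
  unfold Fix. intros ha hq. apply eq_of_dist0. unfold Top, Rop. rewrite hq.
  expand_inner. field. lra.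
Qed.

(* The strict-pseudocontraction inequality at (p, y), rearranged so that every term
   on the right is small when p ~ y weakly and p - Q p ~ 0 strongly. *)
Lemma strict_pseudo_expanded {H : RealHilbert} kappa (Q : H -> H) (p y : H) :
  strict_pseudo kappa Q ->
  (1 - kappa) * inner (hsub y (Q y)) (hsub y (Q y)) <=
   2 * inner (hsub p (Q p)) (hsub p y) - 2 * inner (hsub y (Q y)) (hsub p y)
   - (1 - kappa) * inner (hsub p (Q p)) (hsub p (Q p))
   + 2 * (1 - kappa) * inner (hsub p (Q p)) (hsub y (Q y)).
Proof.
  intro hQ. specialize (hQ p y). rewrite !hnorm_sq in hQ. expand_inner.
  rewrite (inner_sym (Q p) p), (inner_sym y p), (inner_sym (Q y) p), (inner_sym y (Q p)),
    (inner_sym (Q y) (Q p)), (inner_sym (Q y) y) in *.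
  lra.
Qed.

Lemma demiclosed {H : RealHilbert} kappa (Q : H -> H) (w : nat -> H) (x : H) M :
  kappa < 1 -> strict_pseudo kappa Q ->
  (forall j, inner (w j) (w j) <= M) ->
  (forall y, Un_cv (fun j => inner (w j) y) (inner x y)) ->
  Un_cv (fun j => inner (hsub (w j) (Q (w j))) (hsub (w j) (Q (w j)))) 0 ->
  Fix Q x.
Proof.
  intros hk hQ hw hweak hres.
  set (a := fun j => hsub (w j) (Q (w j))).
  set (b := hsub x (Q x)).
  set (d := fun j => hsub (w j) x).
  assert (had : Un_cv (fun j => inner (a j) (d j)) 0).
  { apply (inner_cv0_of_bounded a d (2 * M + 2 * inner x x) hres).
    intro j. pose proof (sq_dist_le (w j) x). pose proof (hw j). unfold d. lra. }
  assert (hab : Un_cv (fun j => inner (a j) b) 0).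
  { apply (inner_cv0_of_bounded a (fun _ => b) (inner b b) hres). intro. lra. }
  assert (hbd : Un_cv (fun j => inner b (d j)) 0).
  { pose proof (CV_minus _ _ _ _ (hweak b) (Un_cv_const (inner x b))) as h.
    rewrite Rminus_diag in h. refine (Un_cv_ext _ _ _ _ h). intro j.
    unfold d, hsub. rewrite inner_add_r, inner_opp_r, (inner_sym b (w j)), (inner_sym b x).
    reflexivity. }
  assert (hrhs : Un_cv (fun j => 2 * inner (a j) (d j) - 2 * inner b (d j)
      - (1 - kappa) * inner (a j) (a j) + 2 * (1 - kappa) * inner (a j) b) 0).
  { replace 0 with (2 * 0 - 2 * 0 - (1 - kappa) * 0 + 2 * (1 - kappa) * 0) by ring.
    apply CV_plus; [apply CV_minus; [apply CV_minus|]|];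
      apply CV_mult; try apply Un_cv_const; assumption. }
  pose proof (Un_cv0_lower_bound _ _ (fun j => strict_pseudo_expanded kappa Q (w j) x hQ) hrhs)
    as hb. fold b in hb.
  symmetry. apply eq_of_dist0. fold b. pose proof (inner_pos H b). nra.
Qed.

Lemma residual_cv0_unif {H : RealHilbert} (Qs : nat -> H -> H) (Q : H -> H)
  (w : nat -> H) M :
  unif_conv_bounded Qs Q -> (forall j, hnorm (w j) <= M) ->
  Un_cv (fun j => inner (hsub (w j) (Qs j (w j))) (hsub (w j) (Qs j (w j)))) 0 ->
  Un_cv (fun j => inner (hsub (w j) (Q (w j))) (hsub (w j) (Q (w j)))) 0.
Proof.
  intros hunif hw hres.
  assert (hdist : Un_cv (fun j => hnorm (hsub (Qs j (w j)) (Q (w j)))) 0).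
  { intros eps heps. destruct (hunif M eps heps) as [N hN]. exists N. intros j hj.
    unfold R_dist. rewrite Rminus_0_r, Rabs_right by (apply Rle_ge, sqrt_pos).
    apply hN; [exact hj | apply hw]. }
  assert (hdist2 : Un_cv (fun j => inner (hsub (Qs j (w j)) (Q (w j)))
                                        (hsub (Qs j (w j)) (Q (w j)))) 0).
  { pose proof (CV_mult _ _ _ _ hdist hdist) as h. rewrite Rmult_0_l in h.
    refine (Un_cv_ext _ _ _ _ h). intro j. rewrite <- hnorm_sq. ring. }
  pose proof (CV_plus _ _ _ _ (Un_cv0_scal _ 2 hres) (Un_cv0_scal _ 2 hdist2)) as hsum.
  rewrite Rplus_0_r in hsum.
  refine (Un_cv0_squeeze _ _ _ hsum). intro j.
  split; [apply inner_pos | apply sq_dist_triangle].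
Qed.

Theorem lemma4 (H : RealHilbert) (kappa : R) (Qn : nat -> H -> H) (F : H -> Prop)
  (alpha : nat -> R)
  (hkappa : 0 <= kappa < 1)
  (hQn : forall n, strict_pseudo kappa (Qn n))
  (hF : forall n x, Fix (Qn n) x <-> F x)
  (halpha : forall n, kappa < alpha n < 1)
  (hsub_seq : forall sigma : nat -> nat, strictly_increasing sigma ->
     exists nu : nat -> nat, strictly_increasing nu /\
     exists Q : H -> H, strict_pseudo kappa Q /\ (forall x, Fix Q x <-> F x) /\
       unif_conv_bounded (fun n => Qn (sigma (nu n))) Q) :
  coherent (fun n => Top kappa (alpha n) (Qn n)).
Proof.
  intros z [M hM] _ hres x [k [hk hweak]] n.
  apply Top_fix; [apply halpha|]. apply hF.
  destruct (hsub_seq k hk) as [nu [hnu [Q [hQ [hQF hunif]]]]].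
  apply hQF.
  assert (hresQ : Un_cv (fun m => inner (hsub (z m) (Qn m (z m))) (hsub (z m) (Qn m (z m)))) 0).
  { refine (Un_cv_ext _ _ _ _ (Un_cv0_scal _ ((2 / (1 - kappa)) ^ 2) (summable_terms_cv0 _ hres))).
    intro m. rewrite (Top_residual kappa (alpha m)) by apply halpha. field. lra. }
  set (s := fun j => k (nu j)).
  assert (hs : strictly_increasing s) by exact (strictly_increasing_comp k nu hk hnu).
  assert (hresw : Un_cv (fun j => inner (hsub (z (s j)) (Q (z (s j))))
                                        (hsub (z (s j)) (Q (z (s j))))) 0).
  { apply (residual_cv0_unif (fun j => Qn (s j)) Q (fun j => z (s j)) M hunif (fun j => hM _)).
    exact (Un_cv_subseq _ _ s hs hresQ). }
  apply (demiclosed kappa Q (fun j => z (s j)) x (M ^ 2) (proj2 hkappa) hQ); [| |exact hresw].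
  - intro j. rewrite <- hnorm_sq. pose proof (hM (s j)). pose proof (sqrt_pos (inner (z (s j)) (z (s j)))).
    unfold hnorm in *. nra.
  - intro y. exact (Un_cv_subseq _ _ nu hnu (hweak y)).
Qed.
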